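(* Let $\mathcal Q=\mathbb R^n$, $\alpha,\beta,\gamma\in[0,1]$, and let $g_s$ be a one-parameter group of transformations acting as in the context. Assume $\tilde L^{\mathcal E}_d$ is invariant: $\tilde L^{\mathcal E}_d(\tilde\Phi_{g_s}(y_k),\tilde\Phi_{g_s}(y_{k+1}),\tilde U_k^{(1)},\tilde U_k^{(2)},h)=\tilde L^{\mathcal E}_d(y_k,y_{k+1},U_k^{(1)},U_k^{(2)},h)$ for all $s$ and all arguments, where $\tilde U_k^{(1)}=\Psi_{g_s}(\bar q_k^\beta)U_k^{(1)}$ and $\tilde U_k^{(2)}=\Psi_{g_s}(\bar q_k^{1-\beta})U_k^{(2)}$. Let $\xi(y)=\frac{d}{ds}\big|_{s=0}\tilde\Phi_{g_s}(y)$ and $I_d(y,p_y)=p_y^\top\xi(y)$. Then along every solution $(y_d,U_d^{(1)},U_d^{(2)})$ of the discrete Euler–Lagrange equations $D_2\tilde L^{\mathcal E}_{d,k-1}+D_1\tilde L^{\mathcal E}_{d,k}=0$ ($k=1,\dots,N-1$) and minimisation conditions $D_{U^{(1)}}\tilde L^{\mathcal E}_{d,k}=D_{U^{(2)}}\tilde L^{\mathcal E}_{d,k}=0$ ($k=0,\dots,N-1$), one has $I_d(y_k,p^-_{y,k})=I_d(y_{k+1},p^+_{y,k+1})$ for all $k$; hence $I_d(y_k,p_{y,k})$, $p_{y,k}=p^-_{y,k}=p^+_{y,k}$, is conserved.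
   Context: Setting: $\mathcal Q=\mathbb R^n$, $y=(q,\lambda)\in T^*\mathcal Q$, controls in $\mathbb R^m$; smooth $f(q,v)$, $\rho(q)\in\mathbb R^{n\times m}$, $\mathrm g(q)$ symmetric positive definite. $\tilde L^{\mathcal E}(q,\lambda,v,v_\lambda,u)=v_\lambda^\top v+\lambda^\top(f(q,v)+\rho(q)u)-\frac12u^\top\mathrm g(q)u$. Notation: $\bar y_k^\gamma=\gamma y_k+(1-\gamma)y_{k+1}$ (similarly $\bar q_k^\gamma$), $\Delta y_k=(y_{k+1}-y_k)/h$. Approximate discrete Lagrangian: $\tilde L^{\mathcal E}_d(y_k,y_{k+1},U^{(1)},U^{(2)},h)=h[\alpha\tilde L^{\mathcal E}(\bar y_k^\gamma,\Delta y_k,U^{(1)})+(1-\alpha)\tilde L^{\mathcal E}(\bar y_k^{1-\gamma},\Delta y_k,U^{(2)})]$, with $U^{(1)},U^{(2)}$ regarded as control values attached to the points $\bar q_k^\beta$, $\bar q_k^{1-\beta}$; $\tilde L^{\mathcal E}_{d,k}$ denotes its value on the $k$-th interval. Discrete momenta: $p^-_{y,k}=-D_1\tilde L^{\mathcal E}_d(y_k,y_{k+1},U_k^{(1)},U_k^{(2)},h)$, $p^+_{y,k+1}=D_2\tilde L^{\mathcal E}_d(y_k,y_{k+1},U_k^{(1)},U_k^{(2)},h)$. Group actions: a Lie group $\mathcal G$ acts on $\mathcal Q$ by $\Phi_g$; cotangent lift $\tilde\Phi_g(q,\lambda)=(\Phi_g(q),(D\Phi_{g^{-1}}(\Phi_g(q)))^\top\lambda)$;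 the action on controls is given by linear maps $\Psi_g(q)$ with $\rho(\Phi_g(q))\Psi_g(q)u=D\Phi_g(q)\rho(q)u$. A one-parameter group of transformations is a smooth additive subgroup $s\mapsto g_s$ with $g_0=e$. *)

From HB Require Import structures.
From mathcomp Require Import all_boot all_order all_algebra.
From mathcomp Require Import all_classical all_reals all_analysis.
Set Implicit Arguments. Unset Strict Implicit. Unset Printing Implicit Defensive.
Import Order.TTheory GRing.Theory Num.Theory.
Import numFieldNormedType.Exports.
Local Open Scope ring_scope.

Fixpoint dd (R : realType) (V W : normedModType R) (vs : seq V) (f : V -> W)
  : V -> W :=
  match vs with
  | [::] => f
  | v :: vs' => fun x => 'D_v (dd vs' f) x
  end.

Definition smooth (R : realType) (V W : normedModType R) (f : V -> W) : Prop :=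
  forall (vs : seq V) (x : V), differentiable (dd vs f) x.

Definition dotv (R : realType) n (a b : 'cV[R]_n) : R := (a^T *m b) 0 0.

(* (DF(q))^T lam, for F : R^n -> R^n, as a column vector. *)
Definition dTapp (R : realType) n (F : 'cV[R]_n -> 'cV[R]_n) (q lam : 'cV[R]_n)
  : 'cV[R]_n :=
  \col_(i < n) dotv lam ('d F q (delta_mx i 0)).

Definition LE (R : realType) n m
  (f : 'cV[R]_n -> 'cV[R]_n -> 'cV[R]_n) (rho : 'cV[R]_n -> 'M[R]_(n, m))
  (g : 'cV[R]_n -> 'M[R]_m)
  (q lam v vlam : 'cV[R]_n) (u : 'cV[R]_m) : R :=
  dotv vlam v + dotv lam (f q v + rho q *m u) - 2^-1 * dotv u (g q *m u).

Definition cvx (R : realType) n (gam : R) (a b : 'cV[R]_n * 'cV[R]_n)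
  : 'cV[R]_n * 'cV[R]_n :=
  (gam *: a.1 + (1 - gam) *: b.1, gam *: a.2 + (1 - gam) *: b.2).

Definition LEd (R : realType) n m
  (f : 'cV[R]_n -> 'cV[R]_n -> 'cV[R]_n) (rho : 'cV[R]_n -> 'M[R]_(n, m))
  (g : 'cV[R]_n -> 'M[R]_m) (alpha gam : R)
  (yk yk1 : 'cV[R]_n * 'cV[R]_n) (U1 U2 : 'cV[R]_m) (h : R) : R :=
  let yg := cvx gam yk yk1 in
  let yg' := cvx (1 - gam) yk yk1 in
  let dq := h^-1 *: (yk1.1 - yk.1) in
  let dlam := h^-1 *: (yk1.2 - yk.2) in
  h * (alpha * LE f rho g yg.1 yg.2 dq dlam U1
       + (1 - alpha) * LE f rho g yg'.1 yg'.2 dq dlam U2).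

From HB Require Import structures.
From mathcomp Require Import all_boot all_order all_algebra.
From mathcomp Require Import all_classical all_reals all_analysis.
From mathcomp Require Import ring lra.
Import Order.TTheory GRing.Theory Num.Theory.
Import numFieldNormedType.Exports.
Local Open Scope ring_scope.

(* Moving both endpoints by the cotangent
   lift of g_s and both controls by Psi_(g_s) leaves L_d unchanged, so the
   derivative at s = 0 of L_d along this curve vanishes.  By the chain rule it is
   D_1 L_d . xi(y_k) + D_2 L_d . xi(y_(k+1)) plus the control partials, which
   vanish by the minimisation conditions: this is
   I_d(y_k, p^-_k) = I_d(y_(k+1), p^+_(k+1)), and the discrete Euler-Lagrange
   equations say p^+_k = p^-_k.
   For the curve to pass through the given controls U_k at s = 0 we need
   U_k = Psi_(g_0) V.  Psi_(g_0) need not be the identity, but invariance at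
   s = 0 makes the control terms of L_d invariant under it, and positive
   definiteness of g then forces it to be invertible whenever its slot has
   nonzero weight (alpha or 1 - alpha); a slot of weight zero does not enter L_d
   at all. *)

Set Implicit Arguments.
Unset Strict Implicit.
Unset Printing Implicit Defensive.

Section Differentials.
Variable R : realType.
Implicit Types U V W : normedModType R.

Lemma differentiable_fst U V (x : U * V) : differentiable (@fst U V) x.
Proof.
have lin : linear (@fst U V) by [].
pose L : {linear (U * V)%type -> U} :=
  HB.pack (@fst U V) (GRing.isLinear.Build _ _ _ _ _ lin).
by apply: (linear_differentiable (f := L)) => y; exact: cvg_fst.
Qed.

Lemma differentiable_snd U V (x : U * V) : differentiable (@snd U V) x.
Proof.
have lin : linear (@snd U V) by [].
pose L : {linear (U * V)%type -> V} :=
  HB.pack (@snd U V) (GRing.isLinear.Build _ _ _ _ _ lin).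
by apply: (linear_differentiable (f := L)) => y; exact: cvg_snd.
Qed.

Lemma differentiable_mx U a b (M : U -> 'M[R]_(a, b)) x :
  (forall i j, differentiable (fun z => M z i j) x) -> differentiable M x.
Proof.
move=> dM.
have -> : M = \sum_(i < a) \sum_(j < b) (fun z => M z i j *: delta_mx i j).
  apply/funext => z; rewrite fct_sumE (matrix_sum_delta (M z)).
  by apply: eq_bigr => i _; rewrite fct_sumE.
apply: differentiable_sum => i; apply: differentiable_sum => j.
exact: differentiableZl.
Qed.

Lemma differentiable_mx_coord U a b (M : U -> 'M[R]_(a, b)) x i j :
  differentiable M x -> differentiable (fun z => M z i j) x.
Proof.
move=> dM; apply: (differentiable_comp (g := fun N : 'M[R]_(a, b) => N i j)) => //.
exact: differentiable_coord.
Qed.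

Lemma differentiable_mulmx U a b c (A : U -> 'M[R]_(a, b))
    (B : U -> 'M[R]_(b, c)) x :
  differentiable A x -> differentiable B x ->
  differentiable (fun z => A z *m B z) x.
Proof.
move=> dA dB; apply: differentiable_mx => i j.
have -> : (fun z => (A z *m B z) i j) =
    \sum_(k < b) ((fun z => A z i k) * (fun z => B z k j)).
  by apply/funext => z; rewrite fct_sumE mxE.
by apply: differentiable_sum => k; apply: differentiableM;
  exact: differentiable_mx_coord.
Qed.

Lemma differentiable_trmx U a b (A : U -> 'M[R]_(a, b)) x :
  differentiable A x -> differentiable (fun z => (A z)^T) x.
Proof.
move=> dA; apply: differentiable_mx => i j.
under eq_fun do rewrite mxE.
exact: differentiable_mx_coord.
Qed.

Lemma differentiable_dotv U k (a b : U -> 'cV[R]_k) x :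
  differentiable a x -> differentiable b x ->
  differentiable (fun z => dotv (a z) (b z)) x.
Proof.
move=> da db; apply: (differentiable_mx_coord (M := fun z => (a z)^T *m b z)).
by apply: differentiable_mulmx => //; exact: differentiable_trmx.
Qed.

Lemma differentiable_slicel U V W (F : U * V -> W) a b :
  differentiable F (a, b) -> differentiable (fun z => F (z, b)) a.
Proof.
by move=> dF; apply: (differentiable_comp (f := fun z => (z, b))).
Qed.

Lemma differentiable_slicer U V W (F : U * V -> W) a b :
  differentiable F (a, b) -> differentiable (fun z => F (a, z)) b.
Proof.
by move=> dF; apply: (differentiable_comp (f := fun z => (a, z))).
Qed.

Lemma diff_pairE U V W (F : U * V -> W) a b x y :
  differentiable F (a, b) ->
  'd F (a, b) (x, y) = 'd (fun z => F (z, b)) a x + 'd (fun z => F (a, z)) b y.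
Proof.
move=> dF.
rewrite (diff_comp (f := fun z => (z, b))) // (diff_comp (f := fun z => (a, z))) //.
rewrite /= !diff_pair // !diff_cst !diff_val -linearD /=.
congr ('d F _ _).
by apply/esym/injective_projections; [exact: addr0 | exact: add0r].
Qed.

Lemma diff_const_along U W (F : U -> W) (c : R^o -> U) t :
  differentiable c t -> differentiable F (c t) ->
  (forall s, F (c s) = F (c t)) -> 'd F (c t) ('d c t 1) = 0.
Proof.
move=> dc dF Fc.
have dFc : differentiable (F \o c) t by exact: differentiable_comp.
have := deriveE (1 : R^o) dFc.
rewrite diff_comp //= => <-.
have -> : F \o c = cst (F (c t)) by apply/funext => s /=.
exact: derive_cst.
Qed.

End Differentials.

Section Dotv.
Variables (R : realType) (k : nat).
Implicit Types a b c : 'cV[R]_k.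

Lemma dotvDr a b c : dotv a (b + c) = dotv a b + dotv a c.
Proof. by rewrite /dotv mulmxDr mxE. Qed.

Lemma dotvZl t a c : dotv (t *: a) c = t * dotv a c.
Proof. by rewrite /dotv linearZ /= -scalemxAl mxE. Qed.

Lemma dotvZr t a c : dotv a (t *: c) = t * dotv a c.
Proof. by rewrite /dotv -scalemxAr mxE. Qed.

Lemma dotv0l c : dotv 0 c = 0.
Proof. by rewrite /dotv trmx0 mul0mx mxE. Qed.

Lemma dotv_delta a i : dotv a (delta_mx i 0) = a i 0.
Proof. by rewrite /dotv -colE !mxE. Qed.

End Dotv.

Lemma dTapp_id (R : realType) n (q lam : 'cV[R]_n) : dTapp id q lam = lam.
Proof. by apply/matrixP => i j; rewrite mxE diff_val dotv_delta (ord1 j). Qed.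

Lemma mulmx_inj_unitmx (F : fieldType) k (P : 'M[F]_k) :
  (forall U : 'cV[F]_k, P *m U = 0 -> U = 0) -> P \in unitmx.
Proof.
move=> Pinj; rewrite -unitmx_tr -row_free_unit -kermx_eq0.
apply/eqP/row_matrixP => i; rewrite row0.
have : row i (kermx P^T) *m P^T = 0 by rewrite -row_mul mulmx_ker row0.
move/(congr1 trmx); rewrite trmx_mul trmxK trmx0 => /Pinj.
by move/(congr1 trmx); rewrite trmxK trmx0.
Qed.

Section Lagrangian.
Variables (R : realType) (n m : nat).
Variables (f : 'cV[R]_n -> 'cV[R]_n -> 'cV[R]_n)
  (rho : 'cV[R]_n -> 'M[R]_(n, m)) (g : 'cV[R]_n -> 'M[R]_m).
Implicit Types (alpha gam h : R) (a b : 'cV[R]_n * 'cV[R]_n) (U X Y : 'cV[R]_m).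
Local Notation args :=
  (('cV[R]_n * 'cV[R]_n) * ('cV[R]_n * 'cV[R]_n) * ('cV[R]_m * 'cV[R]_m))%type.

Section Differentiability.
Hypothesis f_diff : forall qv : 'cV[R]_n * 'cV[R]_n,
  differentiable (fun qv : 'cV[R]_n * 'cV[R]_n => f qv.1 qv.2) qv.
Hypothesis rho_diff : forall q, differentiable rho q.
Hypothesis g_diff : forall q, differentiable g q.

Lemma differentiable_LE (T : normedModType R) (q l v vl : T -> 'cV[R]_n)
    (u : T -> 'cV[R]_m) x :
  differentiable q x -> differentiable l x -> differentiable v x ->
  differentiable vl x -> differentiable u x ->
  differentiable (fun z => LE f rho g (q z) (l z) (v z) (vl z) (u z)) x.
Proof.
move=> dq dl dv dvl du.
have df : differentiable (fun z => f (q z) (v z)) x.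
  apply: (differentiable_comp (f := fun z => (q z, v z))
                              (g := fun qv => f qv.1 qv.2)) => //.
  exact: differentiable_pair.
have drho : differentiable (fun z => rho (q z)) x by exact: differentiable_comp.
have dg : differentiable (fun z => g (q z)) x by exact: differentiable_comp.
apply: differentiableB.
  apply: differentiableD; apply: differentiable_dotv => //.
  by apply: differentiableD => //; exact: differentiable_mulmx.
apply: differentiableM => //.
by apply: differentiable_dotv => //; exact: differentiable_mulmx.
Qed.

Lemma differentiable_LEd alpha gam h (p : args) :
  differentiable (fun p : args => LEd f rho g alpha gam p.1.1 p.1.2 p.2.1 p.2.2 h) p.
Proof.
have dfst (T V W : normedModType R) (F : T -> V * W) x :
  differentiable F x -> differentiable (fun z => (F z).1) x.
  by move=> dF; apply: differentiable_comp => //; exact: differentiable_fst.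
have dsnd (T V W : normedModType R) (F : T -> V * W) x :
  differentiable F x -> differentiable (fun z => (F z).2) x.
  by move=> dF; apply: differentiable_comp => //; exact: differentiable_snd.
have [d11 d12] : differentiable (fun z : args => z.1.1) p /\
                 differentiable (fun z : args => z.1.2) p.
  by split; apply: dfst || apply: dsnd; exact: differentiable_fst.
have [d21 d22] : differentiable (fun z : args => z.2.1) p /\
                 differentiable (fun z : args => z.2.2) p.
  by split; apply: dfst || apply: dsnd; exact: differentiable_snd.
rewrite /LEd /cvx /=.
apply: differentiableM => //.
apply: differentiableD; apply: differentiableM => //; apply: differentiable_LE;
  repeat first [ exact: d11 | exact: d12 | exact: d21 | exact: d22
               | apply: differentiableD | apply: differentiableB
               | apply: differentiableN | apply: differentiableZ
               | apply: dfst | apply: dsnd ].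
Qed.

End Differentiability.

Lemma LEd_swap alpha gam a b U1 U2 h :
  LEd f rho g alpha gam a b U1 U2 h
  = LEd f rho g (1 - alpha) (1 - gam) a b U2 U1 h.
Proof. by rewrite /LEd !subKr addrC. Qed.

Lemma LEd_control1E alpha gam a b U1 U2 h :
  LEd f rho g alpha gam a b U1 U2 h = LEd f rho g alpha gam a b 0 U2 h
    + h * alpha * (dotv (cvx gam a b).2 (rho (cvx gam a b).1 *m U1)
                   - 2^-1 * dotv U1 (g (cvx gam a b).1 *m U1)).
Proof.
by rewrite /LEd /LE !mulmx0 !addr0 dotv0l dotvDr; ring.
Qed.

Hypothesis g_pd : forall q U, U != 0 -> 0 < dotv U (g q *m U).

Lemma LEd_control1_unitmx alpha gam a b U2 h (P : 'M[R]_m) :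
  alpha != 0 -> h != 0 ->
  (forall U, LEd f rho g alpha gam a b (P *m U) U2 h
             = LEd f rho g alpha gam a b U U2 h) ->
  P \in unitmx.
Proof.
move=> alpha0 h0 Pinv; apply: mulmx_inj_unitmx => U PU0.
pose q := (cvx gam a b).1; pose lam := (cvx gam a b).2.
(* If P U = 0 then t |-> LEd (t U), a quadratic in t, is constant. *)
have quad0 t : h * alpha * (t * dotv lam (rho q *m U)
                            - 2^-1 * (t * t * dotv U (g q *m U))) = 0.
  have := LEd_control1E alpha gam a b (t *: U) U2 h.
  rewrite -Pinv -scalemxAr PU0 scaler0 -/q -/lam -!scalemxAr dotvZl !dotvZr mulrA.
  by move/eqP; rewrite addrC -subr_eq subrr eq_sym => /eqP.
have /eqP := quad0 1; have /eqP := quad0 2.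
rewrite !mulf_eq0 (negbTE h0) (negbTE alpha0) /=.
move=> /eqP E2 /eqP E1; have d0 : dotv U (g q *m U) = 0 by lra.
by apply/eqP/negPn/negP => /(g_pd q); rewrite d0 ltxx.
Qed.

Lemma LEd_control2_unitmx alpha gam a b U1 h (P : 'M[R]_m) :
  1 - alpha != 0 -> h != 0 ->
  (forall U, LEd f rho g alpha gam a b U1 (P *m U) h
             = LEd f rho g alpha gam a b U1 U h) ->
  P \in unitmx.
Proof.
move=> alpha1 h0 Pinv.
apply: (LEd_control1_unitmx (gam := 1 - gam) alpha1 h0) => U.
by rewrite -LEd_swap -[RHS]LEd_swap.
Qed.

Lemma LEd_control1_shift alpha gam (P : 'M[R]_m) U :
  (alpha != 0 -> P \in unitmx) ->
  exists V, forall a b X Y h,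
    LEd f rho g alpha gam a b (X + (U - P *m V)) Y h
    = LEd f rho g alpha gam a b X Y h.
Proof.
move=> Pu; case: (eqVneq alpha 0) => [-> | /Pu {}Pu].
  by exists 0 => a b X Y h;
    rewrite LEd_control1E [RHS]LEd_control1E !mulr0 !mul0r.
by exists (invmx P *m U) => a b X Y h; rewrite mulKVmx // subrr addr0.
Qed.

Lemma LEd_control2_shift alpha gam (P : 'M[R]_m) U :
  (1 - alpha != 0 -> P \in unitmx) ->
  exists V, forall a b X Y h,
    LEd f rho g alpha gam a b X (Y + (U - P *m V)) h
    = LEd f rho g alpha gam a b X Y h.
Proof.
move=> /(LEd_control1_shift (1 - gam) U) [V shiftV].
by exists V => a b X Y h; rewrite LEd_swap [RHS]LEd_swap.
Qed.

End Lagrangian.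

Section CotangentLift.
Variables (R : realType) (n : nat) (G : Type).
Variables (gmul : G -> G -> G) (gone : G) (ginv : G -> G).
Hypothesis gmulV : forall a, gmul (ginv a) a = gone.
Variable Phi : G -> 'cV[R]_n -> 'cV[R]_n.
Hypothesis Phi1 : forall q, Phi gone q = q.
Hypothesis PhiM : forall a b q, Phi (gmul a b) q = Phi a (Phi b q).

Definition cotangent_lift (a : G) (y : 'cV[R]_n * 'cV[R]_n) :
    'cV[R]_n * 'cV[R]_n :=
  (Phi a y.1, dTapp (Phi (ginv a)) (Phi a y.1) y.2).

Variable gs : R -> G.
Hypothesis gs0 : gs 0 = gone.
Hypothesis gsD : forall s t, gs (s + t) = gmul (gs s) (gs t).
Hypothesis flow_smooth : smooth (fun sq : R^o * 'cV[R]_n => Phi (gs sq.1) sq.2).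

Lemma Phi_ginv_gs s : Phi (ginv (gs s)) = Phi (gs (- s)).
Proof.
apply/funext => q.
have Phi_gsK r : Phi (gs s) (Phi (gs (- s)) r) = r.
  by rewrite -PhiM -gsD subrr gs0 Phi1.
by rewrite -{1}(Phi_gsK q) -PhiM gmulV Phi1.
Qed.

Lemma cotangent_lift_gs0 y : cotangent_lift (gs 0) y = y.
Proof.
have Phi_gs0 : Phi (gs 0) = id by apply/funext => q; rewrite gs0 Phi1.
by rewrite /cotangent_lift Phi_ginv_gs oppr0 Phi_gs0 dTapp_id; case: y.
Qed.

Lemma differentiable_cotangent_lift_gs y t :
  differentiable (fun s : R^o => cotangent_lift (gs s) y) t.
Proof.
pose flow := fun sq : R^o * 'cV[R]_n => Phi (gs sq.1) sq.2.
have dflow sq : differentiable flow sq := flow_smooth [::] sq.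
have dPhi r q e : 'd (Phi (gs r)) q e = 'D_((0 : R^o), e) flow (r, q).
  by rewrite deriveE // (diff_pairE _ _ (dflow _)) linear0 add0r.
have dflow_y (r : R^o) : differentiable (fun s : R^o => flow (s, y.1)) r.
  by apply: (differentiable_comp (f := fun s : R^o => (s, y.1))).
rewrite /cotangent_lift; apply: differentiable_pair => //.
apply: differentiable_mx => i j; rewrite /dTapp.
under eq_fun do rewrite mxE Phi_ginv_gs dPhi.
apply: differentiable_dotv => //.
apply: (differentiable_comp (f := fun s : R^o => (- s, flow (s, y.1)))
                            (g := dd [:: ((0 : R^o), delta_mx i 0)] flow)) => //.
exact: differentiable_pair.
Qed.

End CotangentLift.

Section Noether.
Variables (R : realType) (n m : nat).
Variables (f : 'cV[R]_n -> 'cV[R]_n -> 'cV[R]_n)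
  (rho : 'cV[R]_n -> 'M[R]_(n, m)) (g : 'cV[R]_n -> 'M[R]_m).
Hypothesis f_diff : forall qv : 'cV[R]_n * 'cV[R]_n,
  differentiable (fun qv : 'cV[R]_n * 'cV[R]_n => f qv.1 qv.2) qv.
Hypothesis rho_diff : forall q, differentiable rho q.
Hypothesis g_diff : forall q, differentiable g q.
Hypothesis g_pd : forall q (U : 'cV[R]_m), U != 0 -> 0 < dotv U (g q *m U).
Variables (alpha beta gam : R).
Local Notation Ld := (LEd f rho g alpha gam).

Variables (G : Type) (gmul : G -> G -> G) (gone : G) (ginv : G -> G).
Hypothesis gmulV : forall a, gmul (ginv a) a = gone.
Variable Phi : G -> 'cV[R]_n -> 'cV[R]_n.
Hypothesis Phi1 : forall q, Phi gone q = q.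
Hypothesis PhiM : forall a b q, Phi (gmul a b) q = Phi a (Phi b q).
Variable Psi : G -> 'cV[R]_n -> 'M[R]_m.
Variable gs : R -> G.
Hypothesis gs0 : gs 0 = gone.
Hypothesis gsD : forall s t, gs (s + t) = gmul (gs s) (gs t).
Hypothesis flow_smooth : smooth (fun sq : R^o * 'cV[R]_n => Phi (gs sq.1) sq.2).
Hypothesis Psi_gs_diff : forall sq : R^o * 'cV[R]_n,
  differentiable (fun sq : R^o * 'cV[R]_n => Psi (gs sq.1) sq.2) sq.
Local Notation lift := (cotangent_lift ginv Phi).

Hypothesis Ld_invariant :
  forall s (yk yk1 : 'cV[R]_n * 'cV[R]_n) (U1 U2 : 'cV[R]_m) h,
  Ld (lift (gs s) yk) (lift (gs s) yk1)
     (Psi (gs s) (cvx beta yk yk1).1 *m U1)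
     (Psi (gs s) (cvx (1 - beta) yk yk1).1 *m U2) h
  = Ld yk yk1 U1 U2 h.

Definition generator (y : 'cV[R]_n * 'cV[R]_n) : 'cV[R]_n * 'cV[R]_n :=
  'D_1 (fun s : R^o => lift (gs s) y) 0.

Lemma lift_gs0 y : lift (gs 0) y = y.
Proof. exact: (cotangent_lift_gs0 gmulV Phi1 PhiM gs0 gsD). Qed.

Lemma Ld_control1_preimage y0 y1 U1 : exists V, forall a b X Y h,
  Ld a b (X + (U1 - Psi (gs 0) (cvx beta y0 y1).1 *m V)) Y h = Ld a b X Y h.
Proof.
apply: (LEd_control1_shift f rho g) => alpha0.
apply: (LEd_control1_unitmx (f := f) (rho := rho) (gam := gam) g_pd alpha0
          (oner_neq0 R) (a := y0) (b := y1) (U2 := 0)) => U.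
by rewrite -[RHS](Ld_invariant 0) !lift_gs0 mulmx0.
Qed.

Lemma Ld_control2_preimage y0 y1 U2 : exists V, forall a b X Y h,
  Ld a b X (Y + (U2 - Psi (gs 0) (cvx (1 - beta) y0 y1).1 *m V)) h = Ld a b X Y h.
Proof.
apply: (LEd_control2_shift f rho g) => alpha1.
apply: (LEd_control2_unitmx (f := f) (rho := rho) (gam := gam) g_pd alpha1
          (oner_neq0 R) (a := y0) (b := y1) (U1 := 0)) => U.
by rewrite -[RHS](Ld_invariant 0) !lift_gs0 mulmx0.
Qed.

Lemma differentiable_Psi_gs_mulmx q (V w : 'cV[R]_m) :
  differentiable (fun s : R^o => Psi (gs s) q *m V + w) 0.
Proof.
apply: differentiableD => //; apply: differentiable_mulmx => //.
exact: (differentiable_comp (f := fun s : R^o => (s, q))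
                            (g := fun sq : R^o * 'cV[R]_n => Psi (gs sq.1) sq.2)).
Qed.

Lemma noether_interval (y0 y1 : 'cV[R]_n * 'cV[R]_n) (U1 U2 : 'cV[R]_m) h :
  (forall v, 'd (fun U => Ld y0 y1 U U2 h) U1 v = 0) ->
  (forall v, 'd (fun U => Ld y0 y1 U1 U h) U2 v = 0) ->
  'd (fun z => Ld z y1 U1 U2 h) y0 (generator y0)
    + 'd (fun z => Ld y0 z U1 U2 h) y1 (generator y1) = 0.
Proof.
move=> min1 min2.
pose q1 := (cvx beta y0 y1).1; pose q2 := (cvx (1 - beta) y0 y1).1.
have [V1 shift1] := Ld_control1_preimage y0 y1 U1.
have [V2 shift2] := Ld_control2_preimage y0 y1 U2.
pose ctrl1 (s : R^o) := Psi (gs s) q1 *m V1 + (U1 - Psi (gs 0) q1 *m V1).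
pose ctrl2 (s : R^o) := Psi (gs s) q2 *m V2 + (U2 - Psi (gs 0) q2 *m V2).
pose c s := ((lift (gs s) y0, lift (gs s) y1), (ctrl1 s, ctrl2 s)).
pose F p := Ld p.1.1 p.1.2 p.2.1 p.2.2 h.
have c0 : c 0 = ((y0, y1), (U1, U2)).
  by rewrite /c /ctrl1 /ctrl2 !lift_gs0 !(addrC (_ *m _)) !subrK.
have Fc s : F (c s) = Ld y0 y1 V1 V2 h.
  by rewrite /F /c /ctrl1 /ctrl2 shift1 shift2 Ld_invariant.
have dlift y : differentiable (fun s : R^o => lift (gs s) y) 0.
  exact: (differentiable_cotangent_lift_gs gmulV Phi1 PhiM gs0 gsD flow_smooth).
have xiE y : generator y = 'd (fun s : R^o => lift (gs s) y) 0 1.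
  exact: (@deriveE R _ _ _ _ (1 : R^o) (dlift y)).
have dlifts := differentiable_pair (dlift y0) (dlift y1).
have dctrl1 : differentiable ctrl1 0 := differentiable_Psi_gs_mulmx _ _ _.
have dctrl2 : differentiable ctrl2 0 := differentiable_Psi_gs_mulmx _ _ _.
have dctrls := differentiable_pair dctrl1 dctrl2.
have dF p : differentiable F p :=
  differentiable_LEd f_diff rho_diff g_diff alpha gam h p.
have := diff_const_along (F := F) (c := c) (differentiable_pair dlifts dctrls)
  (dF _) (fun s => etrans (Fc s) (esym (Fc 0))).
have -> : 'd c 0 1 =
    ((generator y0, generator y1), ('d ctrl1 0 1, 'd ctrl2 0 1)).
  rewrite (diff_pair dlifts dctrls) (diff_pair (dlift y0) (dlift y1)).
  by rewrite (diff_pair dctrl1 dctrl2) !xiE.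
rewrite c0 diff_pairE // diff_pairE; last exact: differentiable_slicel.
rewrite diff_pairE; last exact: differentiable_slicer.
by move=> <-; rewrite [X in _ = _ + (X + _)]min1 [X in _ = _ + (_ + X)]min2 !addr0.
Qed.

End Noether.

Theorem mainTheorem12
  (R : realType) (n m : nat)
  (* dynamics and cost data *)
  (f : 'cV[R]_n -> 'cV[R]_n -> 'cV[R]_n)
  (rho : 'cV[R]_n -> 'M[R]_(n, m))
  (g : 'cV[R]_n -> 'M[R]_m)
  (f_smooth : smooth (fun qv : 'cV[R]_n * 'cV[R]_n => f qv.1 qv.2))
  (rho_smooth : smooth rho)
  (g_smooth : smooth g)
  (g_sym : forall q, (g q)^T = g q)
  (g_pd : forall q (u : 'cV[R]_m), u != 0 -> 0 < dotv u (g q *m u))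
  (* parameters *)
  (alpha beta gam : R)
  (alpha01 : 0 <= alpha <= 1) (beta01 : 0 <= beta <= 1) (gam01 : 0 <= gam <= 1)
  (* a group G (carrier, operations, axioms) *)
  (G : Type) (gmul : G -> G -> G) (gone : G) (ginv : G -> G)
  (gmulA : forall a b c, gmul a (gmul b c) = gmul (gmul a b) c)
  (gmul1 : forall a, gmul gone a = a)
  (gmulV : forall a, gmul (ginv a) a = gone)
  (* its action on Q = R^n *)
  (Phi : G -> 'cV[R]_n -> 'cV[R]_n)
  (Phi1 : forall q, Phi gone q = q)
  (PhiM : forall a b q, Phi (gmul a b) q = Phi a (Phi b q))
  (Phi_smooth : forall a, smooth (Phi a))
  (* its action on controls, by linear maps Psi_a(q) *)
  (Psi : G -> 'cV[R]_n -> 'M[R]_m)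
  (Psi_rho : forall a q (u : 'cV[R]_m),
      rho (Phi a q) *m (Psi a q *m u) = 'd (Phi a) q (rho q *m u))
  (* a one-parameter group of transformations s |-> g_s *)
  (gs : R -> G)
  (gs0 : gs 0 = gone)
  (gsD : forall s t, gs (s + t) = gmul (gs s) (gs t))
  (gs_Phi_smooth : smooth (fun sq : R^o * 'cV[R]_n => Phi (gs sq.1) sq.2))
  (gs_Psi_smooth : smooth (fun sq : R^o * 'cV[R]_n => Psi (gs sq.1) sq.2)) :
  (* cotangent lift of the action *)
  let PhiT (a : G) (y : 'cV[R]_n * 'cV[R]_n) : 'cV[R]_n * 'cV[R]_n :=
    (Phi a y.1, dTapp (Phi (ginv a)) (Phi a y.1) y.2) in
  let Ld := LEd f rho g alpha gam in
  (* invariance of the discrete Lagrangian *)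
  (forall (s : R) (yk yk1 : 'cV[R]_n * 'cV[R]_n) (U1 U2 : 'cV[R]_m) (h : R),
      Ld (PhiT (gs s) yk) (PhiT (gs s) yk1)
         (Psi (gs s) (cvx beta yk yk1).1 *m U1)
         (Psi (gs s) (cvx (1 - beta) yk yk1).1 *m U2) h
      = Ld yk yk1 U1 U2 h) ->
  (* infinitesimal generator and Noether quantity I_d(y, p) = p^T xi(y) *)
  let xi (y : 'cV[R]_n * 'cV[R]_n) : 'cV[R]_n * 'cV[R]_n :=
    'D_1 (fun s : R^o => PhiT (gs s) y) 0 in
  let Id (y : 'cV[R]_n * 'cV[R]_n)
         (p : 'cV[R]_n * 'cV[R]_n -> R) : R := p (xi y) in
  forall (N : nat) (h : R) (y : nat -> 'cV[R]_n * 'cV[R]_n)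
         (U1 U2 : nat -> 'cV[R]_m),
  0 < h ->
  (* discrete momenta p^-_{y,k} = -D_1 L_d, p^+_{y,k+1} = D_2 L_d (as covectors) *)
  let pminus (k : nat) : 'cV[R]_n * 'cV[R]_n -> R :=
    fun w => - 'd (fun z => Ld z (y k.+1) (U1 k) (U2 k) h) (y k) w in
  let pplus (k : nat) : 'cV[R]_n * 'cV[R]_n -> R :=
    fun w => 'd (fun z => Ld (y k.-1) z (U1 k.-1) (U2 k.-1) h) (y k) w in
  (* discrete Euler-Lagrange equations, k = 1, ..., N-1 *)
  (forall k, (0 < k < N)%N -> forall w,
      'd (fun z => Ld (y k.-1) z (U1 k.-1) (U2 k.-1) h) (y k) w
      + 'd (fun z => Ld z (y k.+1) (U1 k) (U2 k) h) (y k) w = 0) ->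
  (* minimisation conditions, k = 0, ..., N-1 *)
  (forall k, (k < N)%N -> forall v : 'cV[R]_m,
      'd (fun U => Ld (y k) (y k.+1) U (U2 k) h) (U1 k) v = 0) ->
  (forall k, (k < N)%N -> forall v : 'cV[R]_m,
      'd (fun U => Ld (y k) (y k.+1) (U1 k) U h) (U2 k) v = 0) ->
  (forall k, (k < N)%N -> Id (y k) (pminus k) = Id (y k.+1) (pplus k.+1))
  /\ (forall k, (k < N)%N -> Id (y k) (pminus k) = Id (y 0%N) (pminus 0%N))
  /\ (forall k, (0 < k <= N)%N -> Id (y k) (pplus k) = Id (y 0%N) (pminus 0%N)).
Proof.
move=> PhiT Ld Ld_inv xi Id N h y U1 U2 _ pminus pplus EL min1 min2.
have noether := noether_interval (f_smooth [::]) (rho_smooth [::]) (g_smooth [::])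
  g_pd gmulV Phi1 PhiM gs0 gsD gs_Phi_smooth (gs_Psi_smooth [::]) Ld_inv.
have step k : (k < N)%N -> Id (y k) (pminus k) = Id (y k.+1) (pplus k.+1).
  move=> kN; apply/eqP; rewrite -subr_eq0 -opprD oppr_eq0; apply/eqP.
  exact: noether (min1 k kN) (min2 k kN).
have momenta k : (0 < k < N)%N -> Id (y k) (pplus k) = Id (y k) (pminus k).
  by move=> kN; apply/eqP; rewrite -subr_eq0 opprK; apply/eqP; exact: EL.
have conserved k : (k < N)%N -> Id (y k) (pminus k) = Id (y 0%N) (pminus 0%N).
  elim: k => [//|k IH] kN.
  have kN' : (0 < k.+1 < N)%N by [].
  by rewrite -(momenta k.+1 kN') -(step k (ltnW kN)); exact: IH (ltnW kN).
split; [exact: step | split; [exact: conserved|]].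
by case=> [//|k] /andP[_ kN]; rewrite -(step k kN); exact: conserved.
Qed.
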